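(* Let $(\alpha_1,\alpha_2)\in\mathbb{C}^2$ and $p_1,p_2\in\mathbb{C}[u]\setminus\{0\}$, and let $\mathcal{A}=\mathcal{A}_{\alpha_1,\alpha_2}(p_1,p_2)$ and $\tilde{\mathcal{A}}=\tilde{\mathcal{A}}_{\alpha_1,\alpha_2}(p_1,p_2)$. The following are equivalent: (i) $\mathcal{A}\neq\{0\}$; (ii) the generator $H$ is algebraically independent over $\mathbb{C}$ in $\tilde{\mathcal{A}}$; (iii) $p_1(u+\alpha_2/2)\,p_2(u+\alpha_1/2)=p_1(u-\alpha_2/2)\,p_2(u-\alpha_1/2)$ in $\mathbb{C}[u]$.
   Context: $\tilde{\mathcal{A}}_{\alpha_1,\alpha_2}(p_1,p_2)$ is the associative $\mathbb{C}$-algebra generated by $H,X_1^\pm,X_2^\pm$ with relations, for $i=1,2$: $HX_i^\pm-X_i^\pm H=\pm\alpha_iX_i^\pm$, $X_i^+X_i^-=p_i(H-\alpha_i/2)$, $X_i^-X_i^+=p_i(H+\alpha_i/2)$, and $X_1^+X_2^-=X_2^-X_1^+$, $X_1^-X_2^+=X_2^+X_1^-$. $\mathcal{A}_{\alpha_1,\alpha_2}(p_1,p_2)=\tilde{\mathcal{A}}/\mathcal{I}$ where $\mathcal{I}$ is the ideal of all $a\in\tilde{\mathcal{A}}$ such that $f(H)a=0$ for some nonzero $f\in\mathbb{C}[u]$. *)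

From mathcomp Require Import all_boot all_algebra.
From mathcomp Require Import Rstruct complex.
Set Implicit Arguments. Unset Strict Implicit. Unset Printing Implicit Defensive.
Import GRing.Theory.
Local Open Scope ring_scope.

Definition C : fieldType := (Rdefinitions.R)[i].

Inductive gen := GH | GX1p | GX1m | GX2p | GX2m.

(* Formal expressions of the free associative unital C-algebra on the
   generators: Cst c stands for c * 1.  Scalar multiplication c a is
   Mul (Cst c) a; subtraction a - b is Add a (Mul (Cst (-1)) b). *)
Inductive term :=
| Cst of C
| Gen of gen
| Add of term & term
| Mul of term & term.

Definition Sub (a b : term) : term := Add a (Mul (Cst (-1)) b).
Definition Scal (c : C) (a : term) : term := Mul (Cst c) a.

Definition peval (f : {poly C}) (t : term) : term :=
  foldr (fun c acc => Add (Cst c) (Mul acc t)) (Cst 0) (polyseq f).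

Definition tH := Gen GH.
Definition tX1p := Gen GX1p.
Definition tX1m := Gen GX1m.
Definition tX2p := Gen GX2p.
Definition tX2m := Gen GX2m.

(* The quotient of [term] by [eqAt] is exactly the algebra presented by
   generators and relations. *)
Inductive eqAt (a1 a2 : C) (p1 p2 : {poly C}) : term -> term -> Prop :=
| eqA_refl t : eqAt a1 a2 p1 p2 t t
| eqA_sym t u : eqAt a1 a2 p1 p2 t u -> eqAt a1 a2 p1 p2 u t
| eqA_trans t u v : eqAt a1 a2 p1 p2 t u -> eqAt a1 a2 p1 p2 u v ->
    eqAt a1 a2 p1 p2 t v
| eqA_Add t t' u u' : eqAt a1 a2 p1 p2 t t' -> eqAt a1 a2 p1 p2 u u' ->
    eqAt a1 a2 p1 p2 (Add t u) (Add t' u')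
| eqA_Mul t t' u u' : eqAt a1 a2 p1 p2 t t' -> eqAt a1 a2 p1 p2 u u' ->
    eqAt a1 a2 p1 p2 (Mul t u) (Mul t' u')
| eqA_AddA t u v : eqAt a1 a2 p1 p2 (Add t (Add u v)) (Add (Add t u) v)
| eqA_AddC t u : eqAt a1 a2 p1 p2 (Add t u) (Add u t)
| eqA_Add0 t : eqAt a1 a2 p1 p2 (Add (Cst 0) t) t
| eqA_MulA t u v : eqAt a1 a2 p1 p2 (Mul t (Mul u v)) (Mul (Mul t u) v)
| eqA_Mul1l t : eqAt a1 a2 p1 p2 (Mul (Cst 1) t) t
| eqA_Mul1r t : eqAt a1 a2 p1 p2 (Mul t (Cst 1)) t
| eqA_Mul0 t : eqAt a1 a2 p1 p2 (Mul (Cst 0) t) (Cst 0)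
| eqA_MulDl t u v : eqAt a1 a2 p1 p2 (Mul (Add t u) v) (Add (Mul t v) (Mul u v))
| eqA_MulDr t u v : eqAt a1 a2 p1 p2 (Mul t (Add u v)) (Add (Mul t u) (Mul t v))
| eqA_CstD c d : eqAt a1 a2 p1 p2 (Cst (c + d)) (Add (Cst c) (Cst d))
| eqA_CstM c d : eqAt a1 a2 p1 p2 (Cst (c * d)) (Mul (Cst c) (Cst d))
| eqA_CstC c t : eqAt a1 a2 p1 p2 (Mul (Cst c) t) (Mul t (Cst c))
| eqA_HX1p : eqAt a1 a2 p1 p2 (Sub (Mul tH tX1p) (Mul tX1p tH)) (Scal a1 tX1p)
| eqA_HX1m : eqAt a1 a2 p1 p2 (Sub (Mul tH tX1m) (Mul tX1m tH)) (Scal (- a1) tX1m)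
| eqA_HX2p : eqAt a1 a2 p1 p2 (Sub (Mul tH tX2p) (Mul tX2p tH)) (Scal a2 tX2p)
| eqA_HX2m : eqAt a1 a2 p1 p2 (Sub (Mul tH tX2m) (Mul tX2m tH)) (Scal (- a2) tX2m)
| eqA_X1pm : eqAt a1 a2 p1 p2 (Mul tX1p tX1m) (peval p1 (Sub tH (Cst (a1 / 2))))
| eqA_X1mp : eqAt a1 a2 p1 p2 (Mul tX1m tX1p) (peval p1 (Add tH (Cst (a1 / 2))))
| eqA_X2pm : eqAt a1 a2 p1 p2 (Mul tX2p tX2m) (peval p2 (Sub tH (Cst (a2 / 2))))
| eqA_X2mp : eqAt a1 a2 p1 p2 (Mul tX2m tX2p) (peval p2 (Add tH (Cst (a2 / 2))))
| eqA_X1pX2m : eqAt a1 a2 p1 p2 (Mul tX1p tX2m) (Mul tX2m tX1p)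
| eqA_X1mX2p : eqAt a1 a2 p1 p2 (Mul tX1m tX2p) (Mul tX2p tX1m).

Definition in_idealI (a1 a2 : C) (p1 p2 : {poly C}) (a : term) : Prop :=
  exists f : {poly C}, f != 0 /\ eqAt a1 a2 p1 p2 (Mul (peval f tH) a) (Cst 0).

(* A = A~ / I is nonzero: some element of A~ is not in I. *)
Definition A_nonzero (a1 a2 : C) (p1 p2 : {poly C}) : Prop :=
  ~ (forall a : term, in_idealI a1 a2 p1 p2 a).

Definition H_alg_indep (a1 a2 : C) (p1 p2 : {poly C}) : Prop :=
  forall f : {poly C}, f != 0 -> ~ eqAt a1 a2 p1 p2 (peval f tH) (Cst 0).

Definition shiftp (q : {poly C}) (c : C) : {poly C} := q \Po ('X + c%:P).

(* For every generator X with [H, X] = a X we have f(H) X = X f(H + a).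
   Pushing H through the word X1+ X2- X2+ X1- once via X1+ X2- = X2- X1+ and
   once via X1- X2+ = X2+ X1- evaluates it in two ways as a polynomial in H,
   and the two polynomials differ from the two sides of (iii) by the same
   shift; so (ii) forces (iii).  Conversely, under (iii) the algebra acts on
   C[u] with H acting by multiplication by u, X1+ and X2- by translations,
   and X1-, X2+ by translations followed by multiplication by translates of
   p1, p2; since f(H) acts on 1 by giving f, H is algebraically independent.
   Finally (i) and (ii) are equivalent because I is everything exactly when
   1 lies in I, i.e. when f(H) = 0 for some nonzero f. *)

From Stdlib Require Import Setoid Morphisms.
From Stdlib Require Ncring Ncring_tac.
From Pilot Require Import Defs.
From mathcomp Require Import all_boot all_algebra ring.
From mathcomp Require Import Rstruct complex.
Import GRing.Theory.
Local Open Scope ring_scope.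

Section Shift.
Implicit Types (p q : {poly C}) (c d : C).

Lemma shiftpD p q c : shiftp (p + q) c = shiftp p c + shiftp q c.
Proof. exact: comp_polyD. Qed.

Lemma shiftpM p q c : shiftp (p * q) c = shiftp p c * shiftp q c.
Proof. exact: comp_polyM. Qed.

Lemma shiftpC d c : shiftp d%:P c = d%:P.
Proof. exact: comp_polyC. Qed.

Lemma shiftpX c : shiftp 'X c = 'X + c%:P.
Proof. exact: comp_polyX. Qed.

Lemma shiftp0 p : shiftp p 0 = p.
Proof. by rewrite /shiftp addr0 comp_polyXr. Qed.

Lemma shiftp_shiftp p c d : shiftp (shiftp p c) d = shiftp p (c + d).
Proof.
rewrite /shiftp -comp_polyA comp_polyD comp_polyX comp_polyC.
by rewrite -addrA -polyCD (addrC d).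
Qed.

Lemma shiftp_inj c : injective (shiftp ^~ c).
Proof.
by apply: (can_inj (g := shiftp ^~ (- c))) => p; rewrite shiftp_shiftp subrr shiftp0.
Qed.

End Shift.

Definition shift_balanced (a1 a2 : C) (p1 p2 : {poly C}) : Prop :=
  shiftp p1 (a2 / 2) * shiftp p2 (a1 / 2)
  = shiftp p1 (- (a2 / 2)) * shiftp p2 (- (a1 / 2)).

Lemma shift_balancedE a1 a2 p1 p2 c : shift_balanced a1 a2 p1 p2 <->
  shiftp p1 (a2 / 2 + c) * shiftp p2 (a1 / 2 + c)
  = shiftp p1 (- (a2 / 2) + c) * shiftp p2 (- (a1 / 2) + c).
Proof.
rewrite -!shiftp_shiftp -!shiftpM; split => [-> // | /shiftp_inj //].
Qed.

Definition Opp (t : term) : term := Mul (Cst (-1)) t.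

Section Presentation.
Variables (a1 a2 : C) (p1 p2 : {poly C}).
Local Notation E := (eqAt a1 a2 p1 p2).
Local Notation P f := (peval f tH).

#[local] Hint Resolve eqA_refl : core.

#[local] Instance E_equiv : Equivalence E.
Proof. split; [exact: eqA_refl | exact: eqA_sym | exact: eqA_trans]. Qed.

#[local] Instance Add_proper : Proper (E ==> E ==> E) Add.
Proof. by move=> ? ? h ? ? h'; apply: eqA_Add. Qed.

#[local] Instance Mul_proper : Proper (E ==> E ==> E) Mul.
Proof. by move=> ? ? h ? ? h'; apply: eqA_Mul. Qed.

#[local] Instance Sub_proper : Proper (E ==> E ==> E) Defs.Sub.
Proof. by move=> ? ? h ? ? h'; rewrite /Defs.Sub h h'. Qed.

#[local] Instance Opp_proper : Proper (E ==> E) Opp.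
Proof. by move=> ? ? h; rewrite /Opp h. Qed.

Lemma addOpp t : E (Add t (Opp t)) (Cst 0).
Proof. by rewrite -{1}[t]eqA_Mul1l /Opp -eqA_MulDl -eqA_CstD subrr eqA_Mul0. Qed.

#[local] Instance term_ops : @Ncring.Ring_ops term (Cst 0) (Cst 1) Add Mul Defs.Sub Opp E := {}.

(* Every ring axiom except [t + (-t) = 0] is a constructor of [eqAt]. *)
#[local] Instance term_ring : @Ncring.Ring term _ _ _ _ _ _ _ term_ops.
Proof.
split; try exact _.
all: intros; cbv [Algebra_syntax.addition Algebra_syntax.multiplication
  Algebra_syntax.zero Algebra_syntax.one Algebra_syntax.subtraction
  Algebra_syntax.opposite Algebra_syntax.equality Ncring.add_notation
  Ncring.mul_notation Ncring.zero_notation Ncring.one_notation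
  Ncring.sub_notation Ncring.opp_notation Ncring.eq_notation term_ops].
all: try solve [constructor].
exact: addOpp.
Qed.

Ltac nc := Ncring_tac.non_commutative_ring.

Lemma peval0 t : peval 0 t = Cst 0.
Proof. by rewrite /peval polyseq0. Qed.

Lemma peval_horner f c t :
  E (peval (f * 'X + c%:P) t) (Add (Cst c) (Mul (peval f t) t)).
Proof.
have [-> | f_neq0] := eqVneq f 0; last first.
  by rewrite -cons_poly_def /peval polyseq_cons nil_poly f_neq0.
rewrite mul0r add0r peval0 /peval polyseqC.
by case: eqVneq => [-> | _] /=; rewrite ?eqA_Mul0 ?eqA_Add0.
Qed.

Lemma pevalC c t : E (peval c%:P t) (Cst c).
Proof.
have -> : c%:P = 0 * 'X + c%:P by rewrite mul0r add0r.
by rewrite peval_horner peval0 eqA_Mul0 eqA_AddC eqA_Add0.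
Qed.

Lemma pevalX t : E (peval 'X t) t.
Proof.
have -> : 'X = 1 * 'X + 0%:P :> {poly C} by rewrite mul1r addr0.
by rewrite peval_horner -polyC1 pevalC eqA_Mul1l eqA_Add0.
Qed.

Lemma pevalD f g t : E (peval (f + g) t) (Add (peval f t) (peval g t)).
Proof.
elim/poly_ind: f g => [|f c IH] g; first by rewrite add0r peval0 eqA_Add0.
elim/poly_ind: g => [|g d _]; first by rewrite addr0 peval0; nc.
have -> : f * 'X + c%:P + (g * 'X + d%:P) = (f + g) * 'X + (c + d)%:P.
  by rewrite polyCD mulrDl addrACA.
rewrite !peval_horner IH eqA_CstD; nc.
Qed.

Lemma pevalCM c g t : E (peval (c%:P * g) t) (Mul (Cst c) (peval g t)).
Proof.
elim/poly_ind: g => [|g d IH]; first by rewrite mulr0 peval0 -eqA_CstM mulr0.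
have -> : c%:P * (g * 'X + d%:P) = (c%:P * g) * 'X + (c * d)%:P.
  by rewrite polyCM mulrDr mulrA.
rewrite !peval_horner IH eqA_CstM; nc.
Qed.

Lemma peval_intertwine x t t' f :
  E (Mul x t) (Mul t' x) -> E (Mul x (peval f t)) (Mul (peval f t') x).
Proof.
move=> xt; elim/poly_ind: f => [|f c IH]; first by rewrite !peval0 eqA_CstC.
rewrite !peval_horner.
transitivity (Add (Mul x (Cst c)) (Mul (Mul x (peval f t)) t)); first nc.
rewrite -eqA_CstC IH.
transitivity (Add (Mul (Cst c) x) (Mul (peval f t') (Mul x t))); first nc.
rewrite xt; nc.
Qed.

Lemma pevalM f g t : E (peval (f * g) t) (Mul (peval f t) (peval g t)).
Proof.
elim/poly_ind: f g => [|f c IH] g; first by rewrite mul0r peval0 eqA_Mul0.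
have -> : (f * 'X + c%:P) * g = ((f * g) * 'X + 0%:P) + c%:P * g.
  by rewrite addr0 mulrDl mulrAC.
rewrite pevalD peval_horner pevalCM IH peval_horner.
transitivity (Add (Mul (Cst c) (peval g t)) (Mul (peval f t) (Mul (peval g t) t))).
  nc.
rewrite -(@peval_intertwine t t t g) //; nc.
Qed.

#[local] Instance peval_proper f : Proper (E ==> E) (peval f).
Proof.
move=> t t' tt'; elim/poly_ind: f => [|f c IH]; first by rewrite !peval0.
by rewrite !peval_horner IH tt'.
Qed.

Lemma peval_comp f q t : E (peval (f \Po q) t) (peval f (peval q t)).
Proof.
elim/poly_ind: f => [|f c IH]; first by rewrite comp_poly0 !peval0.
rewrite comp_polyD comp_polyM comp_polyX comp_polyC pevalD pevalM pevalC IH.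
rewrite peval_horner; nc.
Qed.

Lemma peval_shiftp f c t : E (peval (shiftp f c) t) (peval f (Add t (Cst c))).
Proof. by rewrite /shiftp peval_comp pevalD pevalX pevalC. Qed.

Lemma mul_peval_eigen x a f :
  E (Defs.Sub (Mul tH x) (Mul x tH)) (Scal a x) ->
  E (Mul x (P f)) (Mul (P (shiftp f (- a))) x).
Proof.
move=> Hx; rewrite peval_shiftp; apply: peval_intertwine.
have -> : E (Mul (Add tH (Cst (- a))) x) (Add (Mul tH x) (Opp (Scal a x))).
  by rewrite -mulN1r eqA_CstM /Opp /Scal; nc.
by rewrite -Hx; nc.
Qed.

Lemma word_two_ways :
  E (P (shiftp p2 (a2 / 2 - a1) * shiftp p1 (- (a1 / 2))))
    (P (shiftp p1 (- (a1 / 2) + a2) * shiftp p2 (a2 / 2))).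
Proof.
have X1pm : E (Mul tX1p tX1m) (P (shiftp p1 (- (a1 / 2)))).
  by rewrite eqA_X1pm peval_shiftp /Defs.Sub -eqA_CstM mulN1r.
have X2mp : E (Mul tX2m tX2p) (P (shiftp p2 (a2 / 2))).
  by rewrite eqA_X2mp peval_shiftp.
have X1p_P f : E (Mul tX1p (P f)) (Mul (P (shiftp f (- a1))) tX1p).
  exact: mul_peval_eigen _ _ f (eqA_HX1p _ _ _ _).
have X2m_P f : E (Mul tX2m (P f)) (Mul (P (shiftp f a2)) tX2m).
  by have := mul_peval_eigen _ _ f (eqA_HX2m _ _ _ _); rewrite opprK.
rewrite !pevalM -!shiftp_shiftp.
transitivity (Mul (Mul tX1p tX2m) (Mul tX2p tX1m)); first symmetry.
- transitivity (Mul (Mul tX1p (Mul tX2m tX2p)) tX1m); first nc.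
  rewrite X2mp X1p_P.
  transitivity (Mul (P (shiftp (shiftp p2 (a2 / 2)) (- a1))) (Mul tX1p tX1m)).
    nc.
  by rewrite X1pm.
- rewrite eqA_X1pX2m -eqA_X1mX2p.
  transitivity (Mul (Mul tX2m (Mul tX1p tX1m)) tX2p); first nc.
  rewrite X1pm X2m_P.
  transitivity (Mul (P (shiftp (shiftp p1 (- (a1 / 2))) a2)) (Mul tX2m tX2p)).
    nc.
  by rewrite X2mp.
Qed.

Lemma H_alg_indep_eq f g : H_alg_indep a1 a2 p1 p2 -> E (P f) (P g) -> f = g.
Proof.
move=> indep fg; apply/eqP; rewrite -subr_eq0; apply/negPn/negP => /indep; apply.
have -> : f - g = f + (-1)%:P * g by rewrite polyCN polyC1 mulN1r.
by rewrite pevalD pevalCM -fg; apply: addOpp.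
Qed.

Lemma shift_balanced_of_H_alg_indep :
  H_alg_indep a1 a2 p1 p2 -> shift_balanced a1 a2 p1 p2.
Proof.
move=> /H_alg_indep_eq /(_ word_two_ways) word.
apply/(shift_balancedE _ _ _ _ (a2 / 2 - a1 / 2)).
have -> : a2 / 2 + (a2 / 2 - a1 / 2) = - (a1 / 2) + a2 by field.
have -> : a1 / 2 + (a2 / 2 - a1 / 2) = a2 / 2 by ring.
have -> : - (a2 / 2) + (a2 / 2 - a1 / 2) = - (a1 / 2) by ring.
have -> : - (a1 / 2) + (a2 / 2 - a1 / 2) = a2 / 2 - a1 by field.
by rewrite -word mulrC.
Qed.

Lemma A_nonzero_iff_H_alg_indep :
  A_nonzero a1 a2 p1 p2 <-> H_alg_indep a1 a2 p1 p2.
Proof.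
split=> [nonzero f f_neq0 f0 | indep allI].
  by apply: nonzero => t; exists f; split; rewrite // f0 eqA_Mul0.
have [f [f_neq0 f1]] := allI (Cst 1).
by apply: (indep f f_neq0); rewrite -f1 eqA_Mul1r.
Qed.

End Presentation.

Section Representation.
Variables (a1 a2 : C) (p1 p2 : {poly C}).
Hypothesis balanced : shift_balanced a1 a2 p1 p2.

Fixpoint polyrep (t : term) : {poly C} -> {poly C} :=
  match t with
  | Cst c => fun g => c%:P * g
  | Gen GH => fun g => 'X * g
  | Gen GX1p => fun g => shiftp g (- a1)
  | Gen GX1m => fun g => shiftp p1 (a1 / 2) * shiftp g a1
  | Gen GX2p => fun g => shiftp p2 (- (a2 / 2)) * shiftp g (- a2)
  | Gen GX2m => fun g => shiftp g a2
  | Add t u => fun g => polyrep t g + polyrep u g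
  | Mul t u => fun g => polyrep t (polyrep u g)
  end.

Lemma polyrepD t g h : polyrep t (g + h) = polyrep t g + polyrep t h.
Proof.
elim: t g h => [c|[]|t IHt u IHu|t IHt u IHu] g h /=;
  by rewrite ?shiftpD ?mulrDr ?IHt ?IHu // addrACA.
Qed.

Lemma polyrepCM t c g : polyrep t (c%:P * g) = c%:P * polyrep t g.
Proof.
elim: t g => [d|[]|t IHt u IHu|t IHt u IHu] g /=;
  rewrite ?shiftpM ?shiftpC ?IHt ?IHu ?mulrDr //; ring.
Qed.

Lemma polyrep_peval f t q : (forall g, polyrep t g = q * g) ->
  forall g, polyrep (peval f t) g = (f \Po q) * g.
Proof.
move=> tq; rewrite /peval -{2}[f]polyseqK; elim: (polyseq f) => [|c s IH] g /=.
  by rewrite comp_poly0 polyC0 !mul0r.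
rewrite cons_poly_def comp_polyD comp_polyM comp_polyX comp_polyC tq IH; ring.
Qed.

Lemma polyrep_H_addC c g : polyrep (Add tH (Cst c)) g = ('X + c%:P) * g.
Proof. by rewrite /= mulrDl. Qed.

Lemma polyrep_H_subC c g : polyrep (Defs.Sub tH (Cst c)) g = ('X + (- c)%:P) * g.
Proof. rewrite /= !polyCN polyC1; ring. Qed.

Lemma polyrep_X1mX2p g :
  polyrep (Mul tX1m tX2p) g = polyrep (Mul tX2p tX1m) g.
Proof.
move: balanced; rewrite (shift_balancedE _ _ _ _ (a1 / 2 - a2 / 2)).
have -> : a2 / 2 + (a1 / 2 - a2 / 2) = a1 / 2 by ring.
have -> : a1 / 2 + (a1 / 2 - a2 / 2) = - (a2 / 2) + a1 by field.
have -> : - (a2 / 2) + (a1 / 2 - a2 / 2) = a1 / 2 - a2 by field.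
have -> : - (a1 / 2) + (a1 / 2 - a2 / 2) = - (a2 / 2) by ring.
move=> balanced_at /=; rewrite !shiftpM !shiftp_shiftp (addrC (- a2)) !mulrA.
by rewrite balanced_at; ring.
Qed.

Lemma eqAt_polyrep t u : eqAt a1 a2 p1 p2 t u -> polyrep t =1 polyrep u.
Proof.
elim=> {t u} /=.
- by [].
- by move=> t u _ tu g /=; rewrite tu.
- by move=> t u v _ tu _ uv g /=; rewrite tu uv.
- by move=> t t' u u' _ tt' _ uu' g /=; rewrite tt' uu'.
- by move=> t t' u u' _ tt' _ uu' g /=; rewrite uu' tt'.
- by move=> t u v g /=; rewrite addrA.
- by move=> t u g /=; rewrite addrC.
- by move=> t g /=; rewrite polyC0 mul0r add0r.
- by [].
- by move=> t g /=; rewrite polyC1 mul1r.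
- by move=> t g /=; rewrite polyC1 mul1r.
- by move=> t g /=; rewrite polyC0 !mul0r.
- by [].
- by move=> t u v g /=; rewrite polyrepD.
- by move=> c d g /=; rewrite polyCD mulrDl.
- by move=> c d g /=; rewrite polyCM mulrA.
- by move=> c t g /=; rewrite polyrepCM.
all: try by move=> g /=; rewrite shiftpM shiftpX !polyCN polyC1; ring.
- move=> g /=; rewrite (polyrep_peval _ _ _ (polyrep_H_subC _)) shiftpM !shiftp_shiftp.
  by rewrite addrN shiftp0; congr (shiftp _ _ * _); field.
- move=> g /=; rewrite (polyrep_peval _ _ _ (polyrep_H_addC _)) shiftp_shiftp.
  by rewrite addNr shiftp0.
- move=> g /=; rewrite (polyrep_peval _ _ _ (polyrep_H_subC _)) shiftp_shiftp.
  by rewrite addrN shiftp0.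
- move=> g /=; rewrite (polyrep_peval _ _ _ (polyrep_H_addC _)) shiftpM !shiftp_shiftp.
  by rewrite addNr shiftp0; congr (shiftp _ _ * _); field.
- by move=> g; rewrite !shiftp_shiftp addrC.
- exact: polyrep_X1mX2p.
Qed.

Lemma H_alg_indep_of_shift_balanced : H_alg_indep a1 a2 p1 p2.
Proof.
move=> f f_neq0 /eqAt_polyrep/(_ 1).
rewrite (@polyrep_peval _ tH 'X (fun g => erefl)) comp_polyXr /= polyC0 !mulr1 => f0.
by rewrite f0 eqxx in f_neq0.
Qed.

End Representation.

Theorem mainTheorem4 (a1 a2 : C) (p1 p2 : {poly C}) :
  p1 != 0 -> p2 != 0 ->
  [/\ (A_nonzero a1 a2 p1 p2 <-> H_alg_indep a1 a2 p1 p2),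
      (H_alg_indep a1 a2 p1 p2 <->
         shiftp p1 (a2 / 2) * shiftp p2 (a1 / 2)
         = shiftp p1 (- (a2 / 2)) * shiftp p2 (- (a1 / 2)))
    & (A_nonzero a1 a2 p1 p2 <->
         shiftp p1 (a2 / 2) * shiftp p2 (a1 / 2)
         = shiftp p1 (- (a2 / 2)) * shiftp p2 (- (a1 / 2)))].
Proof.
move=> _ _.
have i_ii := A_nonzero_iff_H_alg_indep a1 a2 p1 p2.
have ii_iii : H_alg_indep a1 a2 p1 p2 <-> shift_balanced a1 a2 p1 p2.
  split; [exact: shift_balanced_of_H_alg_indep | exact: H_alg_indep_of_shift_balanced].
by split=> //; rewrite i_ii.
Qed.
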